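(* Let $n$ be odd and let $p$ be an odd prime with $p\nmid n$, $p\equiv\delta\pmod 4$ with $\delta\in\{1,-1\}$, and put $t=(p-\delta)/4$. Let $m$ be an odd positive integer with $pm\equiv1\pmod n$, and let $a_1,\dots,a_t$ be nonnegative integers such that $pa_1,\dots,pa_t$ are congruent mod $n$ to $1,3,\dots,(p-3)/2$ respectively if $\delta=1$, and to $0,2,\dots,(p-3)/2$ respectively if $\delta=-1$. Let $$H(x)=\frac{x^m+1}{x+1}\left(x^{a_1}+\cdots+x^{a_t}\right),\quad f=\delta+(x^n+1)H(x),\quad g=(x^n+1)H(x).$$ Then $M_{Q_{4n}}(f+yg)=\delta p$.
   Context: $Q_{4n}=\langle x,y : x^{2n}=1,\ y^2=x^n,\ xy=yx^{-1}\rangle$. For $f,g\in\mathbb Z[x]$, $M_{Q_{4n}}(f+yg)=\prod_{z^{2n}=1}\big(f(z)f(z^{-1})-z^ng(z)g(z^{-1})\big)$, which is the integer group determinant of $Q_{4n}$ with entries given by the coefficients of $f,g$ reduced mod $x^{2n}-1$. *)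

From HB Require Import structures.
From mathcomp Require Import all_boot all_order all_algebra all_field.
Set Implicit Arguments. Unset Strict Implicit. Unset Printing Implicit Defensive.
Import Order.TTheory GRing.Theory Num.Theory.
Local Open Scope ring_scope.

Definition evC (p : {poly int}) (z : algC) : algC :=
  (map_poly (fun c : int => c%:~R) p).[z].

(* M_{Q_{4n}}(f + y g) = prod_{z^{2n}=1} (f(z) f(z^-1) - z^n g(z) g(z^-1)),
   the product being taken over z = w^k, k < 2n, for a primitive
   2n-th root of unity w (so z ranges over all 2n-th roots of unity). *)
Definition MQ (n : nat) (w : algC) (f g : {poly int}) : algC :=
  \prod_(k < 2 * n)
    (let z := w ^+ k in
     evC f z * evC f z^-1 - z ^+ n * evC g z * evC g z^-1).

Definition Hpoly (m t : nat) (a : 'I_t -> nat) : {poly int} :=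
  (('X^m + 1) %/ ('X + 1)) * \sum_(i < t) 'X^(a i).

From HB Require Import structures.
From mathcomp Require Import all_boot all_order all_algebra all_field.
From mathcomp Require Import ring zify.
Import Order.TTheory GRing.Theory Num.Theory.
Local Open Scope ring_scope.
Set Implicit Arguments. Unset Strict Implicit. Unset Printing Implicit Defensive.

(* Proof of Lemma 5.3: M_{Q_{4n}}(f + y g) = delta p.
   Write v = w^2, a primitive n-th root of unity, and H for Hpoly m a.
   1. At an odd power z = w^(2j+1) we have z^n = -1, so g(z) = 0 and the
      factor is delta^2 = 1; at z = v^j the factor is
      1 + 2 delta (H(z) + H(z^-1)) (the "even factor").  Thus M is the
      product of the even factors over the n-th roots of unity v^j.
   2. At z = 1 we have H(1) = t, so the even factor is 1 + 4 delta t = delta p.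
   3. For an n-th root of unity u != 1, the identity
      H(u^p) (u^p + 1) = (u + 1) (u^e + u^(e+2) + ... + u^(e+2t-2))
      (from p m = 1 and p a_i = 2i + e mod n) and the closed form of this
      geometric sum give, after a field computation,
        F(u^p) (u - 1) (1 + u^p) = delta (1 + u) (u^p - 1)
      for the even factor F.  As j |-> j p permutes the nonzero residues
      mod n, multiplying over u = v^j (j != 0) makes the auxiliary products
      cancel, leaving delta^(n-1) = 1. *)

Lemma prod_pairs (R : comPzSemiRingType) (N : nat) (F : nat -> R) :
  \prod_(k < 2 * N) F k = \prod_(j < N) (F (2 * j)%N * F (2 * j).+1).
Proof.
rewrite -(big_mkord xpredT F) -(big_mkord xpredT (fun j => F (2 * j)%N * F (2 * j).+1)).
elim: N => [|N IH]; first by rewrite muln0 !big_geq.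
by rewrite mulnS addSn add1n !big_nat_recr //= IH mulrA.
Qed.

Lemma prod_split_zero (R : comPzSemiRingType) (n : nat) (F : nat -> R) :
  (0 < n)%N -> \prod_(j < n) F j = F 0%N * \prod_(j < n | (0 < j)%N) F j.
Proof.
case: n => // n _; rewrite (bigD1 ord0) //=; congr (_ * _).
by apply: eq_bigl => j; rewrite -(inj_eq val_inj) lt0n.
Qed.

(* If p is invertible mod n, then j |-> j p permutes the nonzero residues
   mod n, so it leaves any product of an n-periodic function over them fixed. *)
Lemma prod_reindex_unit (R : comPzSemiRingType) (n p m : nat) (F : nat -> R) :
  (0 < n)%N -> (p * m = 1 %[mod n])%N -> (forall k, F (k %% n)%N = F k) ->
  \prod_(j < n | (0 < j)%N) F (j * p)%N = \prod_(j < n | (0 < j)%N) F j.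
Proof.
move=> n0 hpm hF.
have inv (j : 'I_n) : j = ((j * p %% n) * m %% n)%N :> nat.
  by rewrite modnMml -mulnA -modnMmr hpm modnMmr muln1 modn_small.
pose mulp (j : 'I_n) : 'I_n := Ordinal (ltn_pmod (j * p) n0).
have mulp_inj : injective mulp.
  by move=> i j /(congr1 val) /= eq_ij; apply: val_inj; rewrite /= inv eq_ij -inv.
rewrite [RHS](reindex_inj mulp_inj) /=; apply: eq_big => [j|j _]; last by rewrite hF.
apply/idP/idP => [j0 | ]; last first.
  by rewrite !lt0n; apply: contra => /eqP j0; rewrite j0 mul0n mod0n.
by rewrite lt0n; apply: contraTneq j0 => mulp0; rewrite inv mulp0 mul0n mod0n.
Qed.

Lemma prim_root_half_pow (R : idomainType) (n : nat) (w : R) :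
  (0 < n)%N -> (2 * n).-primitive_root w -> w ^+ n = -1.
Proof.
move=> n0 prim_w; have : w ^+ n != 1.
  by rewrite -(prim_order_dvd prim_w); apply/negP => /(dvdn_leq n0); lia.
have : (w ^+ n) ^+ 2 == 1 by rewrite -exprM mulnC prim_expr_order.
by rewrite sqrf_eq1 => /orP [/eqP -> /eqP | /eqP].
Qed.

Lemma odd_root_of_unity_addr1 (R : numDomainType) (n : nat) (y : R) :
  odd n -> y ^+ n = 1 -> y + 1 != 0.
Proof.
move=> on yn; rewrite addr_eq0; apply/eqP => yN; move: yn.
rewrite yN -signr_odd on expr1 => /eqP; rewrite eq_sym -addr_eq0.
by rewrite -[1 + 1]/(2%:R) pnatr_eq0.
Qed.

Definition even_power_sum (R : pzSemiRingType) (t e : nat) (x : R) : R :=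
  \sum_(i < t) x ^+ (2 * i + e).

Lemma even_power_sumE (R : comPzRingType) (t e : nat) (x : R) :
  (x ^+ 2 - 1) * even_power_sum t e x = (x ^+ (2 * t) - 1) * x ^+ e.
Proof.
elim: t => [|t IH]; first by rewrite /even_power_sum big_ord0 mulr0 expr0 subrr mul0r.
rewrite /even_power_sum big_ord_recr /= mulrDr -/(even_power_sum t e x) IH.
rewrite mulnS !exprD; ring.
Qed.

(* The two cases of the lemma: p = 4t + 1 with d = 1 and exponents 2i + 1,
   or p = 4t - 1 with d = -1 and exponents 2i. *)
Definition sign_data (R : pzRingType) (d : R) (e p t : nat) : Prop :=
  [/\ d = 1, e = 1%N & p = (4 * t).+1] \/ [/\ d = -1, e = 0%N & p.+1 = (4 * t)%N].

(* The field computation at the heart of the proof: if h and h' satisfy the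
   relations of H(u^p) and H(u^-p) with the geometric sum, then the even
   factor 1 + 2d(h + h') at u^p is d (1 + u)(u^p - 1) / ((u - 1)(1 + u^p)).
   Writing U = u^(2t), u^p is U^2 u or U^2 / u according to the case. *)
Lemma factor_identity (F : fieldType) (d : F) (e p t : nat) (u h h' : F) :
  sign_data d e p t -> u != 0 -> u ^+ 2 != 1 -> u ^+ p + 1 != 0 ->
  h * (u ^+ p + 1) = (u + 1) * even_power_sum t e u ->
  h' * ((u ^+ p)^-1 + 1) = (u^-1 + 1) * even_power_sum t e u^-1 ->
  (1 + 2 * d * (h + h')) * ((u - 1) * (1 + u ^+ p)) = d * ((1 + u) * (u ^+ p - 1)).
Proof.
move=> hsign u0 u2 z1 hh hh'.
have u21 : u ^+ 2 - 1 != 0 by rewrite subr_eq0.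
have ui21 : u^-1 ^+ 2 - 1 != 0.
  by rewrite subr_eq0 exprVn invr_eq1.
have zi1 : (u ^+ p)^-1 + 1 != 0.
  have up0 : u ^+ p != 0 by rewrite expf_neq0.
  have -> : (u ^+ p)^-1 + 1 = (u ^+ p)^-1 * (1 + u ^+ p) by rewrite mulrDr mulr1 mulVf.
  by rewrite mulf_neq0 ?invr_eq0 // addrC.
have eS (x : F) : x ^+ 2 - 1 != 0 ->
    even_power_sum t e x = (x ^+ (2 * t) - 1) * x ^+ e / (x ^+ 2 - 1).
  by move=> x21; rewrite -even_power_sumE mulrC mulKf.
have eh : h = (u + 1) * even_power_sum t e u / (u ^+ p + 1) by rewrite -hh mulfK.
have eh' : h' = (u^-1 + 1) * even_power_sum t e u^-1 / ((u ^+ p)^-1 + 1)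
  by rewrite -hh' mulfK.
rewrite eh eh' !eS // !exprVn.
have U0 : u ^+ (2 * t) != 0 by rewrite expf_neq0.
case: hsign => [[-> -> hp] | [-> -> hp]].
- have ez : u ^+ p = u ^+ (2 * t) ^+ 2 * u.
    by rewrite hp exprSr -exprM; congr (_ ^+ _ * _); lia.
  move: z1; rewrite ez; set U := u ^+ (2 * t) => z1.
  by field; rewrite u0 U0 addrC z1 mulN1r subr_eq0 eq_sym (negbTE u2).
- have ez : u ^+ p = u ^+ (2 * t) ^+ 2 / u.
    by apply: (mulIf u0); rewrite mulfVK // -exprSr hp -exprM; congr (_ ^+ _); lia.
  move: z1; rewrite ez; set U := u ^+ (2 * t) => z1.
  have uU : u + U ^+ 2 != 0.
    have -> : u + U ^+ 2 = u * (U ^+ 2 / u + 1) by field.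
    by rewrite mulf_neq0.
  by field; rewrite u0 U0 uU mulN1r subr_eq0 eq_sym (negbTE u2) oner_neq0.
Qed.

Section Evaluation.
Variable z : algC.

Lemma evCD (p q : {poly int}) : evC (p + q) z = evC p z + evC q z.
Proof. by rewrite /evC rmorphD hornerD. Qed.

Lemma evCM (p q : {poly int}) : evC (p * q) z = evC p z * evC q z.
Proof. by rewrite /evC rmorphM hornerM. Qed.

Lemma evCC (c : int) : evC c%:P z = c%:~R.
Proof. by rewrite /evC map_polyC hornerC. Qed.

Lemma evC1 : evC 1 z = 1.
Proof. by rewrite -polyC1 evCC. Qed.

Lemma evCXn (k : nat) : evC 'X^k z = z ^+ k.
Proof. by rewrite /evC map_polyXn hornerXn. Qed.

Lemma evC_sum (I : finType) (F : I -> {poly int}) :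
  evC (\sum_i F i) z = \sum_i evC (F i) z.
Proof. by rewrite /evC rmorph_sum horner_sum. Qed.

End Evaluation.

Lemma divp_Xn_add1 (m : nat) : odd m ->
  ('X^m + 1) %/ ('X + 1) * ('X + 1) = 'X^m + 1 :> {poly int}.
Proof.
move=> om; have : root ('X^m + 1 : {poly int}) (-1).
  by rewrite /root hornerD hornerXn hornerC -signr_odd om expr1 addNr.
case/factor_theorem => q ->.
have -> : 'X - (-1)%:P = 'X + 1 :> {poly int} by rewrite polyCN opprK polyC1.
by rewrite Pdiv.IdomainMonic.mulpK // -polyC1 monicXaddC.
Qed.

Lemma Hpoly_eval (m t : nat) (a : 'I_t -> nat) (y : algC) : odd m ->
  evC (Hpoly m a) y * (y + 1) = (y ^+ m + 1) * \sum_(i < t) y ^+ a i.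
Proof.
move=> om; rewrite /Hpoly evCM evC_sum mulrAC.
have -> : evC (('X^m + 1) %/ ('X + 1)) y * (y + 1) = y ^+ m + 1.
  by rewrite -[y in _ * (y + _)]expr1 -(evCXn y 1) -(evC1 y) -evCD -evCM
             divp_Xn_add1 // evCD evCXn evC1.
by congr (_ * _); apply: eq_bigr => i _; rewrite evCXn.
Qed.

Lemma Hpoly_at_one (m t : nat) (a : 'I_t -> nat) : odd m ->
  evC (Hpoly m a) 1 = t%:R.
Proof.
move=> om; apply: (@mulIf _ (1 + 1)); first by rewrite -[1 + 1]/(2%:R) pnatr_eq0.
rewrite Hpoly_eval // expr1n; under eq_bigr do rewrite expr1n.
by rewrite sumr_const card_ord mulrC.
Qed.

Lemma Hpoly_at_power (n p m t e : nat) (a : 'I_t -> nat) (u : algC) :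
  odd m -> u ^+ n = 1 -> (p * m = 1 %[mod n])%N ->
  (forall i : 'I_t, (p * a i = 2 * i + e %[mod n])%N) ->
  evC (Hpoly m a) (u ^+ p) * (u ^+ p + 1) = (u + 1) * even_power_sum t e u.
Proof.
move=> om un hpm ha; rewrite Hpoly_eval // -exprM -(expr_mod _ un) hpm.
rewrite (expr_mod _ un) expr1 addrC; congr (_ * _); apply: eq_bigr => i _.
by rewrite -exprM -(expr_mod _ un) ha (expr_mod _ un).
Qed.

(* The factor of M_{Q_{4n}} at an n-th root of unity y, for f = d + (x^n+1)h
   and g = (x^n+1)h: since y^n = 1 it equals d^2 + 2d(h(y) + h(1/y)). *)
Definition even_factor (h : {poly int}) (d y : algC) : algC :=
  1 + 2 * d * (evC h y + evC h y^-1).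

(* For f = d + (x^n + 1) h and g = (x^n + 1) h with d = +-1, the factors of
   M_{Q_{4n}}(f + y g) at odd powers of w equal 1 (there g vanishes), so only
   the even factors at the n-th roots of unity (w^2)^j remain. *)
Lemma MQ_even_factors (n : nat) (w : algC) (delta : int) (h : {poly int}) :
  (0 < n)%N -> (2 * n).-primitive_root w -> delta * delta = 1 ->
  MQ n w (delta%:P + ('X^n + 1) * h) (('X^n + 1) * h)
  = \prod_(j < n) even_factor h delta%:~R (w ^+ 2 ^+ j).
Proof.
move=> n0 prim_w d2; set d : algC := delta%:~R.
have dd : d * d = 1 by rewrite -intrM d2.
have wn : w ^+ n = -1 := prim_root_half_pow n0 prim_w.
have evf y : evC (delta%:P + ('X^n + 1) * h) y = d + (y ^+ n + 1) * evC h y.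
  by rewrite evCD evCC evCM evCD evCXn evC1.
have evg y : evC (('X^n + 1) * h) y = (y ^+ n + 1) * evC h y.
  by rewrite evCM evCD evCXn evC1.
set f := _ + _ * h; set g := _ * h.
pose F (k : nat) := let z := w ^+ k in
  evC f z * evC f z^-1 - z ^+ n * evC g z * evC g z^-1.
rewrite (_ : MQ n w f g = \prod_(k < 2 * n) F k) // prod_pairs.
apply: eq_bigr => j _; rewrite /F /f /g !evf !evg !exprVn.
have -> : w ^+ (2 * j) ^+ n = 1.
  by rewrite -exprM mulnC exprM wn -signr_odd mul2n odd_double.
have -> : w ^+ (2 * j).+1 ^+ n = -1.
  by rewrite -exprM mulnC exprM wn -signr_odd /= mul2n odd_double.
rewrite invr1 invrN1 addNr /even_factor -exprM.
set H := evC h _; set H' := evC h _.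
transitivity ((d * d + 2 * d * (H + H')) * (d * d)); first by ring.
by rewrite dd mulr1.
Qed.

Section EvenFactors.
Variables (n p m t e : nat) (a : 'I_t -> nat) (d : algC).
Hypotheses (on : odd n) (om : odd m) (hpm : (p * m = 1 %[mod n])%N)
  (ha : forall i : 'I_t, (p * a i = 2 * i + e %[mod n])%N)
  (hsign : sign_data d e p t).

Lemma even_factor_at_power (u : algC) : u ^+ n = 1 -> u != 1 ->
  even_factor (Hpoly m a) d (u ^+ p) * ((u - 1) * (1 + u ^+ p))
  = d * ((1 + u) * (u ^+ p - 1)).
Proof.
move=> un u1.
have n0 : (0 < n)%N := odd_gt0 on.
have u0 : u != 0.
  apply/eqP => u0; move: un; rewrite u0 expr0n gtn_eqF //= => /eqP.
  by rewrite eq_sym oner_eq0.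
have u2 : u ^+ 2 != 1.
  rewrite -subr_eq0 subr_sqr_1 mulf_neq0 ?subr_eq0 //.
  exact: odd_root_of_unity_addr1 on un.
have upn : u ^+ p ^+ n = 1 by rewrite -exprM mulnC exprM un expr1n.
have uin : u^-1 ^+ n = 1 by rewrite exprVn un invr1.
apply: factor_identity hsign u0 u2 _ _ _.
- exact: odd_root_of_unity_addr1 on upn.
- exact: Hpoly_at_power om un hpm ha.
- by rewrite -exprVn; apply: Hpoly_at_power om uin hpm ha.
Qed.

(* F(1) = 1 + 4 d t = d p, because H(1) = t. *)
Lemma even_factor_at_one : even_factor (Hpoly m a) d 1 = d * p%:R.
Proof.
rewrite /even_factor invr1 Hpoly_at_one //.
case: hsign => [[-> _ ->] | [-> _ hp]].
  by rewrite -[(4 * t).+1%:R]natr1 natrM; ring.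
have -> : p%:R = 4%:R * t%:R - 1 :> algC by rewrite -natrM -hp mulrSr addrK.
ring.
Qed.

(* The product of the even factors over the nontrivial n-th roots of unity
   is 1: reindexing by j |-> j p turns it into d^(n-1) = 1. *)
Lemma even_factor_nontrivial_product (v : algC) : n.-primitive_root v ->
  \prod_(j < n | (0 < j)%N) even_factor (Hpoly m a) d (v ^+ j) = 1.
Proof.
move=> prim_v; have n0 : (0 < n)%N := odd_gt0 on.
have vn : v ^+ n = 1 := prim_expr_order prim_v.
have vkn k : v ^+ k ^+ n = 1 by rewrite -exprM mulnC exprM vn expr1n.
have periodic (G : algC -> algC) k : G (v ^+ (k %% n)) = G (v ^+ k).
  by rewrite (expr_mod _ vn).
have vj1 (j : 'I_n) : (0 < j)%N -> v ^+ j != 1.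
  move=> j0; rewrite -(prim_order_dvd prim_v).
  by apply/negP => /(dvdn_leq j0); rewrite leqNgt ltn_ord.
have sign_prod : \prod_(j < n | (0 < j)%N) d = 1.
  have d0 : d != 0 by case: hsign => [[-> _ _] | [-> _ _]]; rewrite ?oppr_eq0 oner_eq0.
  apply: (mulfI d0); rewrite mulr1 -(prod_split_zero (fun=> d) n0).
  rewrite prodr_const card_ord; case: hsign => [[-> _ _] | [-> _ _]].
  - by rewrite expr1n.
  - by rewrite -signr_odd on expr1.
pose D := \prod_(j < n | (0 < j)%N) ((v ^+ j - 1) * (1 + v ^+ (j * p))).
have D0 : D != 0.
  apply/prodf_neq0 => j j0; rewrite mulf_neq0 ?subr_eq0 ?vj1 // addrC.
  exact: odd_root_of_unity_addr1 on (vkn _).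
apply: (mulIf D0); rewrite mul1r.
rewrite -(prod_reindex_unit n0 hpm (periodic (even_factor (Hpoly m a) d))).
rewrite /D -big_split /=.
under eq_bigr => j j0 do rewrite exprM even_factor_at_power ?vkn ?vj1 //.
rewrite !big_split /= sign_prod mul1r mulrC; under eq_bigr do rewrite -exprM.
rewrite (prod_reindex_unit n0 hpm (periodic (fun y => y - 1))).
by rewrite -(prod_reindex_unit n0 hpm (periodic (fun y => 1 + y))).
Qed.

Lemma even_factor_product (v : algC) : n.-primitive_root v ->
  \prod_(j < n) even_factor (Hpoly m a) d (v ^+ j) = d * p%:R.
Proof.
move=> prim_v; have n0 : (0 < n)%N := odd_gt0 on.
rewrite (prod_split_zero (fun j => even_factor (Hpoly m a) d (v ^+ j)) n0).
by rewrite expr0 even_factor_at_one even_factor_nontrivial_product // mulr1.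
Qed.

End EvenFactors.

Theorem lemma5p3 (n p m t : nat) (delta : int) (a : 'I_t -> nat) (w : algC) :
  odd n -> prime p -> odd p -> ~~ (p %| n)%N ->
  (delta = 1 \/ delta = -1) ->
  p%:Z - delta = 4 * t%:Z ->
  odd m -> (p * m = 1 %[mod n])%N ->
  (forall i : 'I_t,
     (p * a i = (if delta == 1 then (2 * i).+1 else 2 * i) %[mod n])%N) ->
  (2 * n)%N.-primitive_root w ->
  MQ n w (delta%:P + ('X^n + 1) * Hpoly m a) (('X^n + 1) * Hpoly m a)
    = (delta * p%:Z)%:~R.
Proof.
move=> on _ _ _ hdelta hpt om hpm ha prim_w.
pose e : nat := if delta == 1 then 1%N else 0%N.
have hsign : sign_data (delta%:~R : algC) e p t.
  rewrite /e; case: hdelta hpt => -> hpt; [left | right]; split => //; lia.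
have ha' (i : 'I_t) : (p * a i = 2 * i + e %[mod n])%N.
  by rewrite ha /e; case: (delta == 1); rewrite ?addn1 ?addn0.
have prim_v : n.-primitive_root (w ^+ 2).
  by have := dvdn_prim_root prim_w (dvdn_mull 2 (dvdnn n)); rewrite mulnK ?odd_gt0.
rewrite MQ_even_factors ?odd_gt0 //; last by case: hdelta => ->.
by rewrite (even_factor_product on om hpm ha' hsign prim_v) intrM.
Qed.
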